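(* In the setting below, the image of the ring homomorphism $\Phi:\mathbb{Q}[X_{F,e},Y_k:F\in\mathcal{F}_K,k\in K]\to H^*(X_P;\mathbb{Q})$ lies in $H^*(X_P;\mathbb{Q})^{W_K}$.
   Context: Setting: $R$ is a reduced crystallographic root system spanning an $n$-dimensional Euclidean space $V$, with simple system $S=\{\alpha_1,\dots,\alpha_n\}$ identified with $\{1,\dots,n\}$ and Weyl group $W$; $M$ is a lattice with $\mathbb{Z}R\subseteq M\subseteq\{x:2\langle x,\alpha\rangle/\langle\alpha,\alpha\rangle\in\mathbb{Z}\ \forall\alpha\in R\}$; $\Lambda\subset C_S\cap\mathbb{Q}M$ finite with $P=\operatorname{conv}(W(\Lambda))$ full-dimensional, simple (each vertex in exactly $n$ facets) and non-degenerate (no vertex on the boundary of $C_S$); $K\subseteq S$, $W_K$ generated by the reflections $r_k$ in $\alpha_k$, $k\in K$, $H_k$ the fixed hyperplane of $r_k$, $C_K=\{x:\langle x,\alpha_k\rangle\ge0\ \forall k\in K\}$. $\mathcal{F}_K$ is the set of facets of $P$ with barycenter in $C_K$, $W_F$ the stabilizer of $F$ in $W_K$, $\mathcal{F}=\{(F,s):F\in\mathcal{F}_K,s\in W_K/W_F\}$. For a facet $G$ of $P$, $\ell_G$ is its outward normal primitive in $M^\vee=\{y:\langle y,u\rangle\in\mathbb{Z}\ \forall u\in M\}$, and $\ell_{H_k}$ is the primitive outward normal of the facet $H_k\cap P$ of $P\cap C_K$ (a negative multiple of $\alpha_k$). $X_P$ is the toric variety of $P$ with respect to $M$, with $H^*(X_P;\mathbb{Q})=\mathbb{Q}[X_{F,s}:(F,s)\in\mathcal{F}]/(I_P+J_P)$,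 $\deg X_{F,s}=2$, $I_P$ generated by $X_{F_1,s_1}\cdots X_{F_p,s_p}$ with $s_1(F_1)\cap\cdots\cap s_p(F_p)=\emptyset$, $J_P$ generated by $\sum_{(F,s)\in\mathcal{F}}\langle u,\ell_{s(F)}\rangle X_{F,s}$, $u\in M$; $W_K$ acts by $t\cdot X_{F,s}=X_{F,ts}$. For $F\in\mathcal{F}_K$ and $s\in W_K$ write $s(\ell_F)-\ell_F=\sum_{k\in K}C_{F,s,k}\ell_{H_k}$ with $C_{F,s,k}\in\mathbb{Q}$ (nonnegative, uniquely determined and depending only on $sW_F$). $\Phi$ is the ring homomorphism with $\Phi(X_{F,e})=\sum_{s\in W_K/W_F}X_{F,s}$ and $\Phi(Y_k)=\sum_{(F,s)\in\mathcal{F}}C_{F,s,k}X_{F,s}$. *)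

(* V = 'cV[R]_n over R : realType (mathcomp-analysis `reals`),
   cohomology presented as a quotient of multinomials' {mpoly rat[N]}. *)
From HB Require Import structures.
From mathcomp Require Import all_boot all_order all_algebra.
From mathcomp Require Import reals.
From mathcomp Require Import mpoly.
Set Implicit Arguments. Unset Strict Implicit. Unset Printing Implicit Defensive.
Import Order.TTheory GRing.Theory Num.Theory.
Local Open Scope ring_scope.

Section Geometry.
Variable R : realType.
Variable n : nat.
Local Notation V := 'cV[R]_n.

Definition dot (u v : V) : R := (u^T *m v) 0 0.
Definition isZ (x : R) : Prop := exists z : int, x = z%:~R.
Definition cop (x a : V) : R := 2 * dot x a / dot a a.
Definition refl (a : V) : 'M[R]_n := 1%:M - (2 / dot a a) *: (a *m a^T).

Definition reduced_cryst_root_system (Rt : seq V) : Prop :=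
  [/\ 0 \notin Rt,
      (forall x : V, exists c : 'I_(size Rt) -> R, x = \sum_i c i *: Rt`_i),
      (forall a b, a \in Rt -> b \in Rt -> refl a *m b \in Rt),
      (forall a b, a \in Rt -> b \in Rt -> isZ (cop b a)) &
      (forall a (c : R), a \in Rt -> c *: a \in Rt -> c = 1 \/ c = -1)].

Definition simple_system (Rt : seq V) (alpha : 'I_n -> V) : Prop :=
  [/\ (forall i, alpha i \in Rt),
      (forall c : 'I_n -> R, \sum_i c i *: alpha i = 0 -> forall i, c i = 0) &
      (forall b, b \in Rt -> exists z : 'I_n -> int,
          b = \sum_i (z i)%:~R *: alpha i /\
          ((forall i, 0 <= z i) \/ (forall i, z i <= 0)))].

Definition prod_refl (s : seq V) : 'M[R]_n := foldr (fun a w => refl a *m w) 1%:M s.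
Definition inW (Rt : seq V) (w : 'M[R]_n) : Prop :=
  exists s : seq V, {subset s <= Rt} /\ w = prod_refl s.
Definition inWK (alpha : 'I_n -> V) (K : {set 'I_n}) (w : 'M[R]_n) : Prop :=
  exists s : seq 'I_n, {subset s <= K} /\ w = prod_refl (map alpha s).

(* the lattice M, given by a Z-basis (columns of B) *)
Definition inM (B : 'M[R]_n) (x : V) : Prop :=
  exists z : 'I_n -> int, x = \sum_i (z i)%:~R *: col i B.
Definition inQM (B : 'M[R]_n) (x : V) : Prop :=
  exists q : 'I_n -> rat, x = \sum_i ratr (q i) *: col i B.
Definition inMdual (B : 'M[R]_n) (y : V) : Prop :=
  forall u, inM B u -> isZ (dot y u).
Definition primitive (B : 'M[R]_n) (y : V) : Prop :=
  [/\ inMdual B y, y != 0 &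
      forall m : nat, (1 < m)%N -> ~ inMdual B (m%:R^-1 *: y)].
Definition lattice_ok (Rt : seq V) (B : 'M[R]_n) : Prop :=
  [/\ B \in unitmx,
      (forall a, a \in Rt -> inM B a) &
      (forall x a, inM B x -> a \in Rt -> isZ (cop x a))].

Definition inCS (alpha : 'I_n -> V) (x : V) : Prop := forall i, 0 <= dot x (alpha i).
Definition inCK (alpha : 'I_n -> V) (K : {set 'I_n}) (x : V) : Prop :=
  forall k, k \in K -> 0 <= dot x (alpha k).

Definition WLam (Rt Lam : seq V) (x : V) : Prop :=
  exists w l, [/\ inW Rt w, l \in Lam & x = w *m l].
Definition inP (Rt Lam : seq V) (x : V) : Prop :=
  exists (m : nat) (p : 'I_m -> V) (c : 'I_m -> R),
    [/\ (forall i, WLam Rt Lam (p i)), (forall i, 0 <= c i),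
        \sum_i c i = 1 & x = \sum_i c i *: p i].

Definition face (P : V -> Prop) (l : V) (x : V) : Prop :=
  P x /\ forall y, P y -> dot l y <= dot l x.
Definition aff_indep (m : nat) (p : 'I_m -> V) : Prop :=
  forall c : 'I_m -> R, \sum_i c i = 0 -> \sum_i c i *: p i = 0 -> forall i, c i = 0.
(* l is the primitive (in M^vee) outward normal of a facet (face of dim n-1) of P;
   facets of the full-dimensional P are identified with these normals *)
Definition isFacetNormal (B : 'M[R]_n) (P : V -> Prop) (l : V) : Prop :=
  primitive B l /\
  exists p : 'I_n -> V, (forall i, face P l (p i)) /\ aff_indep p.
Definition isNormalOf (B : 'M[R]_n) (P : V -> Prop) (l : V) (G : V -> Prop) : Prop :=
  isFacetNormal B P l /\ forall x, face P l x <-> G x.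
Definition vertex (P : V -> Prop) (x : V) : Prop :=
  P x /\ exists l, forall y, face P l y <-> y = x.
Definition full_dim (P : V -> Prop) : Prop :=
  exists p : 'I_n.+1 -> V, (forall i, P (p i)) /\ aff_indep p.
Definition simple_poly (B : 'M[R]_n) (P : V -> Prop) : Prop :=
  forall x, vertex P x -> exists g : 'I_n -> V,
    [/\ injective g,
        (forall i, isFacetNormal B P (g i) /\ face P (g i) x) &
        (forall l, isFacetNormal B P l -> face P l x -> exists i, l = g i)].
Definition nondeg (alpha : 'I_n -> V) (P : V -> Prop) : Prop :=
  forall x, vertex P x -> inCS alpha x -> forall i, dot x (alpha i) != 0.

Definition setting (Rt : seq V) (alpha : 'I_n -> V) (B : 'M[R]_n) (Lam : seq V) : Prop :=
  [/\ reduced_cryst_root_system Rt, simple_system Rt alpha, lattice_ok Rt B,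
      (forall l, l \in Lam -> inCS alpha l /\ inQM B l) &
      [/\ full_dim (inP Rt Lam), simple_poly B (inP Rt Lam) & nondeg alpha (inP Rt Lam)]].

Definition bary_in (P : V -> Prop) (l : V) (C : V -> Prop) : Prop :=
  exists vs : seq V,
    [/\ uniq vs, (forall x, x \in vs <-> vertex P x /\ face P l x) &
        C ((size vs)%:R^-1 *: \sum_(v <- vs) v)].

Definition img (w : 'M[R]_n) (G : V -> Prop) (x : V) : Prop :=
  exists y, G y /\ x = w *m y.
Definition stabF alpha K (P : V -> Prop) (l : V) (w : 'M[R]_n) : Prop :=
  inWK alpha K w /\ forall x, img w (face P l) x <-> face P l x.
Definition same_coset alpha K P l (s s' : 'M[R]_n) : Prop :=
  stabF alpha K P l (invmx s *m s').

(* l_{H_k}: primitive outward normal of H_k cap P in P cap C_K *)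
Definition isLH (B : 'M[R]_n) (alpha : 'I_n -> V) (k : 'I_n) (y : V) : Prop :=
  primitive B y /\ exists c : R, c < 0 /\ y = c *: alpha k.

End Geometry.

Section Ring.
Variable R : realType.
Variable n : nat.
Local Notation V := 'cV[R]_n.
Variables (Rt : seq V) (alpha : 'I_n -> V) (B : 'M[R]_n) (Lam : seq V) (K : {set 'I_n}).
Local Notation P := (inP Rt Lam).

(* FK enumerates (the primitive normals of) the facets in F_K *)
Definition FK_enum (NK : nat) (FK : 'I_NK -> V) : Prop :=
  [/\ injective FK,
      (forall j, isFacetNormal B P (FK j) /\ bary_in P (FK j) (inCK alpha K)) &
      (forall l, isFacetNormal B P l -> bary_in P l (inCK alpha K) -> exists j, l = FK j)].

(* ix enumerates the pairs (F, s) in calF: ix i = (index of F in FK, a representative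
   s in W_K of the coset s W_F), each pair occurring exactly once. *)
Definition pair_enum (NK : nat) (FK : 'I_NK -> V) (N : nat)
    (ix : 'I_N -> 'I_NK * 'M[R]_n) : Prop :=
  [/\ (forall i, inWK alpha K (ix i).2),
      (forall j s, inWK alpha K s -> exists i,
          (ix i).1 = j /\ same_coset alpha K P (FK j) (ix i).2 s) &
      (forall i i', (ix i).1 = (ix i').1 ->
          same_coset alpha K P (FK (ix i).1) (ix i).2 (ix i').2 -> i = i')].

Variables (NK : nat) (FK : 'I_NK -> V) (N : nat) (ix : 'I_N -> 'I_NK * 'M[R]_n).

Definition sF (i : 'I_N) : V -> Prop := img (ix i).2 (face P (FK (ix i).1)).

Definition isIgen (g : {mpoly rat[N]}) : Prop :=
  exists S : {set 'I_N},
    ~ (exists x, forall i, i \in S -> sF i x) /\ g = \prod_(i in S) 'X_i.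
Definition isJgen (g : {mpoly rat[N]}) : Prop :=
  exists u, inM B u /\ exists cf : 'I_N -> rat,
    (forall i l, isNormalOf B P l (sF i) -> ratr (cf i) = dot u l) /\
    g = \sum_i cf i *: 'X_i.
Definition inIJ (q : {mpoly rat[N]}) : Prop :=
  exists (m : nat) (a g : 'I_m -> {mpoly rat[N]}),
    (forall r, isIgen (g r) \/ isJgen (g r)) /\ q = \sum_r a r * g r.

(* C i m is C_{F,s,k} for ix i = (F,s) and k = enum_val m *)
Definition C_ok (lH : 'I_n -> V) (C : 'I_N -> 'I_#|K| -> rat) : Prop :=
  forall i, (ix i).2 *m FK (ix i).1 - FK (ix i).1
            = \sum_(m : 'I_#|K|) ratr (C i m) *: lH (enum_val m).

(* Phi on generators: variable lshift j is X_{F_j,e}, variable rshift m is Y_{enum_val m} *)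
Definition Phi_gen (C : 'I_N -> 'I_#|K| -> rat) (v : 'I_(NK + #|K|)) : {mpoly rat[N]} :=
  match split v with
  | inl j => \sum_(i | (ix i).1 == j) 'X_i
  | inr m => \sum_i C i m *: 'X_i
  end.
Definition Phi (C : 'I_N -> 'I_#|K| -> rat) (p : {mpoly rat[NK + #|K|]}) : {mpoly rat[N]} :=
  comp_mpoly [tuple Phi_gen C v | v < NK + #|K|] p.

(* action of t in W_K on Q[X_{F,s}]: X_i |-> X_(sigma i), where sigma encodes s |-> t s *)
Definition act (sigma : 'I_N -> 'I_N) (q : {mpoly rat[N]}) : {mpoly rat[N]} :=
  comp_mpoly [tuple 'X_(sigma i) | i < N] q.
Definition represents_t (t : 'M[R]_n) (sigma : 'I_N -> 'I_N) : Prop :=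
  forall i, (ix (sigma i)).1 = (ix i).1 /\
    same_coset alpha K P (FK (ix i).1) (t *m (ix i).2) (ix (sigma i)).2.

End Ring.

(* Phi is a substitution and t acts by a ring endomorphism, while congruence modulo
   the ideal I_P + J_P is compatible with sums and products; so it suffices to treat
   the generators.  Phi(X_{F,e}) is the sum of the X_{F,s} over the cosets s W_F,
   which t permutes.  For Y_k: the normals l_{H_k'} (k' in K) are linearly
   independent dual vectors, so some u in QM has <u, l_{H_k'}> = delta_{k k'};
   then <u, l_{s(F)}> = <u, l_F> + C_{F,s,k}, so Phi(Y_k) differs from the J_P
   element sum <u, l_{s(F)}> X_{F,s} by a t-invariant combination, and t maps that
   element to the J_P element of t(u).
   All of this rests on l_{s(F)} = s(l_F), i.e. on a facet having a unique primitive
   outward normal: the facet spans an affine hyperplane, which fixes the normal up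
   to a scalar; primitivity makes the scalar a unit of Z, and full-dimensionality
   of P rules out -1. *)
From HB Require Import structures.
From mathcomp Require Import all_boot all_order all_algebra.
From mathcomp Require Import reals.
From mathcomp Require Import mpoly.
Import Order.TTheory GRing.Theory Num.Theory.
Local Open Scope ring_scope.
Set Implicit Arguments. Unset Strict Implicit. Unset Printing Implicit Defensive.

Section InnerProduct.
Variables (R : realType) (n : nat).
Local Notation V := 'cV[R]_n.

Lemma dotE (u v : V) : dot u v = \sum_j u j 0 * v j 0.
Proof. by rewrite /dot mxE; apply: eq_bigr => j _; rewrite mxE. Qed.

Lemma dotC (u v : V) : dot u v = dot v u.
Proof. by rewrite !dotE; apply: eq_bigr => j _; rewrite mulrC. Qed.

Lemma dotDl (u v w : V) : dot (u + v) w = dot u w + dot v w.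
Proof. by rewrite !dotE -big_split; apply: eq_bigr => j _; rewrite mxE mulrDl. Qed.

Lemma dotZl (c : R) (u w : V) : dot (c *: u) w = c * dot u w.
Proof. by rewrite !dotE mulr_sumr; apply: eq_bigr => j _; rewrite mxE mulrA. Qed.

Lemma dotBl (u v w : V) : dot (u - v) w = dot u w - dot v w.
Proof. by rewrite dotDl -scaleN1r dotZl mulN1r. Qed.

Lemma dotDr (u v w : V) : dot w (u + v) = dot w u + dot w v.
Proof. by rewrite !(dotC w) dotDl. Qed.

Lemma dotZr (c : R) (u w : V) : dot w (c *: u) = c * dot w u.
Proof. by rewrite !(dotC w) dotZl. Qed.

Lemma dotBr (u v w : V) : dot w (u - v) = dot w u - dot w v.
Proof. by rewrite !(dotC w) dotBl. Qed.

Lemma dot0l (w : V) : dot 0 w = 0.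
Proof. by rewrite dotE big1 // => j _; rewrite mxE mul0r. Qed.

Lemma dot0r (w : V) : dot w 0 = 0.
Proof. by rewrite dotC dot0l. Qed.

Lemma dot_suml (I : Type) (r : seq I) (P : pred I) (F : I -> V) w :
  dot (\sum_(i <- r | P i) F i) w = \sum_(i <- r | P i) dot (F i) w.
Proof.
exact: (big_morph (fun x => dot x w) (fun x y => dotDl x y w) (dot0l w)).
Qed.

Lemma dot_sumr (I : Type) (r : seq I) (P : pred I) (F : I -> V) w :
  dot w (\sum_(i <- r | P i) F i) = \sum_(i <- r | P i) dot w (F i).
Proof. by rewrite dotC dot_suml; apply: eq_bigr => i _; rewrite dotC. Qed.

Lemma dot_mulmxl (A : 'M[R]_n) (u v : V) : dot (A *m u) v = dot u (A^T *m v).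
Proof. by rewrite /dot trmx_mul mulmxA. Qed.

Lemma dot_eq0 (u : V) : (dot u u == 0) = (u == 0).
Proof.
apply/idP/idP; last by move/eqP->; rewrite dot0r.
rewrite dotE psumr_eq0; last by move=> j _; rewrite -expr2 sqr_ge0.
move/allP => u0; apply/eqP/matrixP => i j; rewrite (ord1 j) mxE.
by have /(_ (mem_index_enum i)) := u0 i; rewrite mulf_eq0 orbb => /eqP.
Qed.

Lemma trmx_mul_dot (a u : V) : a^T *m u = (dot a u)%:M.
Proof. by apply/matrixP => i j; rewrite (ord1 i) (ord1 j) [RHS]mxE eqxx mulr1n. Qed.

End InnerProduct.

Section Reflections.
Variables (R : realType) (n : nat).
Local Notation V := 'cV[R]_n.

Lemma trmx_refl (a : V) : (refl a)^T = refl a.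
Proof. by rewrite /refl linearB /= trmx1 linearZ /= trmx_mul trmxK. Qed.

Lemma reflE (a x : V) : refl a *m x = x - cop x a *: a.
Proof.
rewrite /refl mulmxBl mul1mx -scalemxAl -mulmxA trmx_mul_dot mul_mx_scalar scalerA.
by rewrite /cop dotC mulrAC.
Qed.

Lemma refl_involutive (a : V) : a != 0 -> refl a *m refl a = 1%:M.
Proof.
move=> a0; rewrite {2}/refl mulmxBr mulmx1 -scalemxAr mulmxA reflE.
rewrite /cop mulfK ?dot_eq0 //.
have -> : a - 2 *: a = - a by rewrite scalerDl scale1r opprD addNKr.
by rewrite mulNmx scalerN opprK /refl subrK.
Qed.

Lemma prod_refl_cat (s1 s2 : seq V) :
  prod_refl (s1 ++ s2) = prod_refl s1 *m prod_refl s2.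
Proof. by elim: s1 => [|a s IH] /=; rewrite ?mul1mx // IH mulmxA. Qed.

Lemma trmx_prod_refl (s : seq V) : (prod_refl s)^T = prod_refl (rev s).
Proof.
elim: s => [|a s IH]; first by rewrite /= trmx1.
rewrite [prod_refl (a :: s)]/= trmx_mul IH rev_cons -cats1 prod_refl_cat.
by rewrite /= mulmx1 trmx_refl.
Qed.

End Reflections.

Section WeylGroup.
Variables (R : realType) (n : nat).
Local Notation V := 'cV[R]_n.
Variable Rt : seq V.
Hypothesis Rt0 : 0 \notin Rt.

Lemma inW_orthogonal (w : 'M[R]_n) : inW Rt w -> w^T *m w = 1%:M /\ w *m w^T = 1%:M.
Proof.
case=> s [+ ->]; suff wTw : {subset s <= Rt} -> (prod_refl s)^T *m prod_refl s = 1%:M.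
  by move=> /wTw sTs; split; last exact: mulmx1C.
elim: s => [|a s IH] /= sRt; first by rewrite trmx1 mulmx1.
have a0 : a != 0 by apply: contraNneq Rt0 => <-; apply: sRt; rewrite inE eqxx.
rewrite trmx_mul trmx_refl -mulmxA (mulmxA (refl a)) refl_involutive // mul1mx IH //.
by move=> x xs; apply: sRt; rewrite inE xs orbT.
Qed.

Lemma inW_tr (w : 'M[R]_n) : inW Rt w -> inW Rt w^T.
Proof.
case=> s [sRt ->]; exists (rev s); split; last exact: trmx_prod_refl.
by move=> x; rewrite mem_rev; apply: sRt.
Qed.

Lemma inW_mul (w1 w2 : 'M[R]_n) : inW Rt w1 -> inW Rt w2 -> inW Rt (w1 *m w2).
Proof.
case=> s1 [sRt1 ->] [s2 [sRt2 ->]]; exists (s1 ++ s2); split; last exact/esym/prod_refl_cat.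
by move=> x; rewrite mem_cat => /orP[]; [apply: sRt1 | apply: sRt2].
Qed.

Lemma mulWtrK (w : 'M[R]_n) : inW Rt w -> @cancel V V (mulmx w) (mulmx w^T).
Proof. by move=> /inW_orthogonal[wTw _] x; rewrite mulmxA wTw mul1mx. Qed.

Lemma multrWK (w : 'M[R]_n) : inW Rt w -> @cancel V V (mulmx w^T) (mulmx w).
Proof. by move=> /inW_orthogonal[_ wwT] x; rewrite mulmxA wwT mul1mx. Qed.

Lemma dot_mulW (w : 'M[R]_n) (x y : V) : inW Rt w -> dot (w *m x) (w *m y) = dot x y.
Proof. by move=> /mulWtrK wK; rewrite dot_mulmxl wK. Qed.

Lemma invmx_W (w : 'M[R]_n) : inW Rt w -> invmx w = w^T.
Proof.
move=> /inW_orthogonal[_ wwT]; have [wu _] := mulmx1_unit wwT.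
by rewrite -[invmx w]mulmx1 -wwT mulmxA mulVmx // mul1mx.
Qed.

End WeylGroup.

Section Lattice.
Variables (R : realType) (n : nat).
Local Notation V := 'cV[R]_n.
Variable B : 'M[R]_n.

Lemma isZP (x : R) : isZ x <-> x \is a Num.int.
Proof. by split=> /intrP. Qed.

Lemma inM_col r : inM B (col r B).
Proof.
exists (fun i => (i == r)%:R); rewrite (bigD1 r) //= big1 ?addr0.
  by rewrite eqxx scale1r.
by move=> i /negbTE ->; rewrite scale0r.
Qed.

Lemma inM_subZ (x a : V) (c : R) : inM B x -> inM B a -> isZ c -> inM B (x - c *: a).
Proof.
case=> z -> [z' ->] [k ->]; exists (fun i => z i - k * z' i).
rewrite scaler_sumr -sumrB; apply: eq_bigr => i _.
by rewrite scalerA rmorphB rmorphM scalerBl.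
Qed.

Lemma inMdualP (y : V) : inMdual B y <-> forall r, isZ (dot y (col r B)).
Proof.
split=> [yM r | yB u [z ->]]; first exact/yM/inM_col.
rewrite dot_sumr; apply/isZP/rpred_sum => i _.
by rewrite dotZr rpredM ?rpred_int //; apply/isZP.
Qed.

Variable Rt : seq V.
Hypothesis Rt0 : 0 \notin Rt.
Hypothesis latok : lattice_ok Rt B.

Lemma inM_W (w : 'M[R]_n) (x : V) : inW Rt w -> inM B x -> inM B (w *m x).
Proof.
case: latok => _ RtM copZ [s [+ ->]].
elim: s x => [|a s IH] x sRt xM /=; first by rewrite mul1mx.
have aRt : a \in Rt by apply: sRt; rewrite inE eqxx.
have {}IH y : inM B y -> inM B (prod_refl s *m y).
  by apply: IH => b bs; apply: sRt; rewrite inE bs orbT.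
by rewrite -mulmxA reflE; apply: inM_subZ; [apply: IH | exact: RtM | apply: copZ; first exact: IH].
Qed.

Lemma inMdual_W (w : 'M[R]_n) (y : V) : inW Rt w -> inMdual B y -> inMdual B (w *m y).
Proof. by move=> wW yM u uM; rewrite dot_mulmxl; apply/yM/inM_W/uM/inW_tr. Qed.

Lemma primitive_W (w : 'M[R]_n) (y : V) : inW Rt w -> primitive B y -> primitive B (w *m y).
Proof.
move=> wW [yM y0 yprim]; split; first exact: inMdual_W.
  by apply: contraNneq y0 => wy0; rewrite -(mulWtrK Rt0 wW y) wy0 mulmx0.
move=> m m1 /(inMdual_W (inW_tr wW)); rewrite -scalemxAr (mulWtrK Rt0 wW).
exact: yprim.
Qed.

End Lattice.

Section PolytopeW.
Variables (R : realType) (n : nat).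
Local Notation V := 'cV[R]_n.
Variables (Rt Lam : seq V) (B : 'M[R]_n).
Hypothesis Rt0 : 0 \notin Rt.
Hypothesis latok : lattice_ok Rt B.
Local Notation P := (inP Rt Lam).

Lemma inP_W (w : 'M[R]_n) (x : V) : inW Rt w -> P x -> P (w *m x).
Proof.
move=> wW [m [p [c [pWL c0 c1 ->]]]]; exists m, (fun i => w *m p i), c; split=> //.
  move=> i; have [w' [l [w'W lLam ->]]] := pWL i.
  by exists (w *m w'), l; rewrite mulmxA; split=> //; apply: inW_mul.
by rewrite mulmx_sumr; apply: eq_bigr => i _; rewrite scalemxAr.
Qed.

Lemma face_W (w : 'M[R]_n) (l x : V) : inW Rt w ->
  face P (w *m l) x <-> face P l (w^T *m x).
Proof.
move=> wW; have wTW := inW_tr wW.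
split=> [[Px lmax] | [Px lmax]]; split.
- exact: inP_W.
- by move=> y Py; have := lmax _ (inP_W wW Py); rewrite !dot_mulmxl (mulWtrK Rt0 wW).
- by rewrite -(multrWK Rt0 wW x); apply: inP_W.
- by move=> y Py; have := lmax _ (inP_W wTW Py); rewrite !dot_mulmxl.
Qed.

Lemma aff_indep_W (w : 'M[R]_n) m (p : 'I_m -> V) : inW Rt w -> aff_indep p ->
  aff_indep (fun i => w *m p i).
Proof.
move=> wW pind c c0 cp0; apply: pind => //; apply: (can_inj (mulWtrK Rt0 wW)).
by rewrite mulmx0 mulmx_sumr -[RHS]cp0; apply: eq_bigr => i _; rewrite scalemxAr.
Qed.

Lemma isFacetNormal_W (w : 'M[R]_n) (l : V) : inW Rt w -> isFacetNormal B P l ->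
  isFacetNormal B P (w *m l).
Proof.
move=> wW [lprim [p [pl pind]]]; split; first exact: (primitive_W Rt0 latok).
exists (fun i => w *m p i); split; last exact: aff_indep_W.
by move=> i; apply/(face_W _ _ wW); rewrite (mulWtrK Rt0 wW).
Qed.

End PolytopeW.

Section LinearIndependence.
Variable R : realType.

Definition mx_of_cols m n (e : 'I_m -> 'cV[R]_n) : 'M[R]_(n, m) := \matrix_(j, i) e i j 0.

Definition lin_indep m n (e : 'I_m -> 'cV[R]_n) : Prop :=
  forall x : 'I_m -> R, \sum_i x i *: e i = 0 -> forall i, x i = 0.

Lemma mul_mx_of_cols m n (e : 'I_m -> 'cV[R]_n) (x : 'cV[R]_m) :
  mx_of_cols e *m x = \sum_i x i 0 *: e i.
Proof.
apply/matrixP => j k; rewrite (ord1 k) !mxE summxE; apply: eq_bigr => i _.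
by rewrite !mxE mulrC.
Qed.

Lemma mul_tr_mx_of_cols m n (e : 'I_m -> 'cV[R]_n) (y : 'cV[R]_n) i :
  ((mx_of_cols e)^T *m y) i 0 = dot (e i) y.
Proof. by rewrite mxE dotE; apply: eq_bigr => j _; rewrite !mxE. Qed.

Lemma row_free_tr_mx_of_cols m n (e : 'I_m -> 'cV[R]_n) :
  lin_indep e -> row_free (mx_of_cols e)^T.
Proof.
move=> eind; rewrite -kermx_eq0; apply/eqP/row_matrixP => i; rewrite row0.
have : row i (kermx (mx_of_cols e)^T) *m (mx_of_cols e)^T = 0.
  by rewrite -row_mul mulmx_ker row0.
move=> /(congr1 trmx); rewrite trmx_mul trmxK trmx0 mul_mx_of_cols => /eind v0.
by apply/rowP => j; have := v0 j; rewrite !mxE.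
Qed.

Lemma lin_indep_orth_eq0 n (e : 'I_n -> 'cV[R]_n) (y : 'cV[R]_n) :
  lin_indep e -> (forall i, dot (e i) y = 0) -> y = 0.
Proof.
move=> /row_free_tr_mx_of_cols; rewrite row_free_unit => Eu ey0.
have : (mx_of_cols e)^T *m y = 0.
  by apply/matrixP => i k; rewrite (ord1 k) mul_tr_mx_of_cols ey0 mxE.
by move=> /(congr1 (mulmx (invmx (mx_of_cols e)^T))); rewrite mulKmx // mulmx0.
Qed.

Lemma aff_indep_lin_indep m n (p : 'I_m.+1 -> 'cV[R]_n) :
  aff_indep p -> lin_indep (fun i => p (lift ord0 i) - p ord0).
Proof.
move=> pind x x0.
pose c j := if unlift ord0 j is Some i then x i else - \sum_i x i.
have c_lift i : c (lift ord0 i) = x i by rewrite /c liftK.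
have c_0 : c ord0 = - \sum_i x i by rewrite /c unlift_none.
have c_sum : \sum_j c j = 0.
  by rewrite big_ord_recl c_0 (eq_bigr _ (fun i _ => c_lift i)) addNr.
have c_comb : \sum_j c j *: p j = 0.
  rewrite big_ord_recl c_0 (eq_bigr (fun i => x i *: p (lift ord0 i))); last first.
    by move=> i _; rewrite c_lift.
  rewrite -[RHS]x0; under [in RHS]eq_bigr => i _ do rewrite scalerBr.
  by rewrite sumrB -scaler_suml scaleNr addrC.
by move=> i; rewrite -c_lift; apply: pind.
Qed.

End LinearIndependence.

Section FacetNormals.
Variable R : realType.

Lemma face_dot_eq n (P : 'cV[R]_n -> Prop) l x y :
  face P l x -> face P l y -> dot l x = dot l y.
Proof. by move=> [Px xmax] [Py ymax]; apply/le_anti; rewrite xmax // ymax. Qed.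

Lemma full_dim_orth_eq0 n (P : 'cV[R]_n -> Prop) (l : 'cV[R]_n) (h : R) :
  full_dim P -> (forall y, P y -> dot l y = h) -> l = 0.
Proof.
move=> [q [Pq /aff_indep_lin_indep qind]] lh.
apply: (lin_indep_orth_eq0 qind) => i.
by rewrite dotC dotBr !lh // subrr.
Qed.

Lemma aff_normal_colinear n (p : 'I_n.+1 -> 'cV[R]_n.+1) (l l' : 'cV[R]_n.+1) :
  aff_indep p -> (forall i, dot l (p i) = dot l (p ord0)) ->
  (forall i, dot l' (p i) = dot l' (p ord0)) ->
  l != 0 -> l' = (dot l l' / dot l l) *: l.
Proof.
move=> /aff_indep_lin_indep pind lp l'p l0.
have ll0 : dot l l != 0 by rewrite dot_eq0.
pose e j := if unlift ord0 j is Some i then p (lift ord0 i) - p ord0 else l.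
have e_lift i : e (lift ord0 i) = p (lift ord0 i) - p ord0 by rewrite /e liftK.
have e_0 : e ord0 = l by rewrite /e unlift_none.
have eind : lin_indep e.
  move=> x; rewrite big_ord_recl e_0 (eq_bigr _ (fun i _ => congr1 _ (e_lift i))).
  set d := \sum_(i < n) _ => xe0.
  have d_orth : dot l d = 0.
    by rewrite dot_sumr big1 // => i _; rewrite dotZr dotBr !lp subrr mulr0.
  have x0 : x ord0 = 0.
    move: (congr1 (dot l) xe0); rewrite dot0r dotDr d_orth addr0 dotZr.
    by move/eqP; rewrite mulf_eq0 (negbTE ll0) orbF => /eqP.
  move: xe0; rewrite x0 scale0r add0r => /pind xl0 j.
  by case: (unliftP ord0 j) => [i ->|->].
have y0 : dot l l *: l' - dot l l' *: l = 0.
  apply: (lin_indep_orth_eq0 eind) => j; rewrite dotBr !dotZr.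
  case: (unliftP ord0 j) => [i ->|->]; last by rewrite e_0 (dotC l l') mulrC subrr.
  by rewrite e_lift !(dotC (_ - _)) !dotBr lp l'p !subrr !mulr0 subrr.
move/eqP: y0; rewrite subr_eq0 => /eqP y0.
by rewrite mulrC -scalerA -y0 scalerA mulVf // scale1r.
Qed.

Lemma inMdual_coords n (B : 'M[R]_n) (y : 'cV[R]_n) :
  inMdual B y -> exists z : 'I_n -> int, forall r, dot y (col r B) = (z r)%:~R.
Proof.
move=> /inMdualP yZ; apply/fin_all_exists: (fun r => (yZ r)).
Qed.

Lemma dot_col_neq0 n (B : 'M[R]_n) (y : 'cV[R]_n) :
  B \in unitmx -> y != 0 -> exists r, dot y (col r B) != 0.
Proof.
move=> Bu y0; case: (pickP (fun r => dot y (col r B) != 0)) => [r yr|yB0]; first by exists r.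
suff : B^T *m y = 0.
  move=> /(congr1 (mulmx (invmx B^T))); rewrite mulKmx ?unitmx_tr // mulmx0 => y0'.
  by rewrite y0' eqxx in y0.
apply/matrixP => r k; rewrite (ord1 k) !mxE -[RHS](eqP (negbFE (yB0 r))) dotE.
by apply: eq_bigr => j _; rewrite !mxE mulrC.
Qed.

Lemma primitive_dvd_coords n (B : 'M[R]_n) (l : 'cV[R]_n) (z : 'I_n -> int) (d : int) :
  primitive B l -> (forall r, dot l (col r B) = (z r)%:~R) ->
  0 < d -> (forall r, (d %| z r)%Z) -> d = 1.
Proof.
move=> [_ _ lprim] lz d0 dz.
have dE : d = (`|d|%N)%:Z by rewrite gez0_abs // ltW.
case: (ltnP 1 `|d|%N) => [d1|]; last first.
  by rewrite leq_eqVlt ltnS leqn0 absz_eq0 (gt_eqF d0) orbF => /eqP d1; rewrite dE d1.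
exfalso; apply: (lprim _ d1); apply/inMdualP => r.
rewrite dotZl lz; have [k ->] := dvdzP (dz r); apply/isZP.
rewrite rmorphM /= dE /= -[X in _ * (_ * X)]/((`|d|%N)%:R).
by rewrite mulrC -mulrA mulfV ?mulr1 ?rpred_int // pnatr_eq0 -lt0n (ltn_trans _ d1).
Qed.

Lemma primitive_scale_isZ n (B : 'M[R]_n) (l : 'cV[R]_n) (c : R) :
  B \in unitmx -> primitive B l -> inMdual B (c *: l) -> isZ c.
Proof.
move=> Bu lp clM; have [lM l0 _] := lp.
have [z lz] := inMdual_coords lM; have [w clw] := inMdual_coords clM.
have wcz r : (w r)%:~R = c * (z r)%:~R :> R by rewrite -clw -lz dotZl.
have [r0] := dot_col_neq0 Bu l0; rewrite lz intr_eq0 => zr0.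
pose q : rat := (w r0)%:~R / (z r0)%:~R.
have cq : c = ratr q by rewrite fmorph_div !rmorph_int wcz mulfK ?intr_eq0.
have qz r : numq q * z r = w r * denq q.
  apply: (@intr_inj rat); rewrite !rmorphM /= numqE -mulrA (mulrC _ (z r)%:~R) mulrA.
  by congr (_ * _); apply: (fmorph_inj (@ratr R)); rewrite rmorphM /= !rmorph_int -cq wcz.
have d1 : denq q = 1.
  apply: (primitive_dvd_coords lp lz (denq_gt0 q)) => r.
  rewrite -(@Gauss_dvdzr _ (numq q)); last by rewrite coprimezE coprime_sym coprime_num_den.
  by rewrite qz dvdz_mull.
have qE : q = (numq q)%:~R by rewrite numqE d1 mulr1.
by exists (numq q); rewrite cq {1}qE ratr_int.
Qed.

Lemma isFacetNormal_unique n (P : 'cV[R]_n -> Prop) (B : 'M[R]_n) (l l' : 'cV[R]_n) :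
  B \in unitmx -> full_dim P -> isFacetNormal B P l -> isFacetNormal B P l' ->
  (forall x, face P l x <-> face P l' x) -> l = l'.
Proof.
case: n P B l l' => [|n] P B l l' Bu fd [lp [p [pl pind]]] [l'p _] ll'.
  by apply/matrixP => -[].
have [lM l0 _] := lp; have [l'M l'0 _] := l'p.
have pl' i : face P l' (p i) by apply/ll'.
have := aff_normal_colinear pind (fun i => face_dot_eq (pl i) (pl ord0))
  (fun i => face_dot_eq (pl' i) (pl' ord0)) l0.
set c := _ / _ => l'E.
have c0 : c != 0 by apply: contraNneq l'0 => c0; rewrite l'E c0 scale0r.
have [a ca] : isZ c by apply: (primitive_scale_isZ Bu lp); rewrite -l'E.
have [b cb] : isZ c^-1.
  by apply: (primitive_scale_isZ Bu l'p); rewrite l'E scalerA mulVf // scale1r.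
have : b * a = 1 by apply: (@intr_inj R); rewrite rmorphM /= -ca -cb mulVf.
move=> /intUnitRing.unitzPl /orP[/eqP a1 | /eqP aN1]; first by rewrite l'E ca a1 scale1r.
(* [l' = - l] would make [P] lie in the hyperplane of the facet *)
suff l_eq0 : l = 0 by rewrite l_eq0 eqxx in l0.
apply: (full_dim_orth_eq0 (h := dot l (p ord0)) fd) => y Py.
have [_ lmax] := pl ord0; have [_ l'max] := pl' ord0.
apply/le_anti; rewrite lmax //=.
by have := l'max y Py; rewrite l'E ca aN1 !dotZl !mulN1r lerN2.
Qed.

End FacetNormals.

Section SimpleRootNormals.
Variables (R : realType) (n : nat).
Local Notation V := 'cV[R]_n.
Variables (Rt : seq V) (alpha : 'I_n -> V) (B : 'M[R]_n) (K : {set 'I_n}) (lH : 'I_n -> V).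
Hypothesis simple : simple_system Rt alpha.
Hypothesis lH_normal : forall k, k \in K -> isLH B alpha k (lH k).

Lemma lH_lin_indep : lin_indep (fun m : 'I_#|K| => lH (enum_val m)).
Proof.
have [_ alpha_indep _] := simple.
have /fin_all_exists [c cE] : forall m : 'I_#|K|, exists c : R, c < 0 /\ lH (enum_val m) = c *: alpha (enum_val m).
  by move=> m; have [_ [c ?]] := lH_normal (enum_valP m); exists c.
move=> x x0; pose d j := \sum_(m | enum_val m == j) x m * c m.
have d0 : \sum_j d j *: alpha j = 0.
  rewrite -[RHS]x0; under eq_bigr => j _ do rewrite scaler_suml.
  rewrite (exchange_big_dep xpredT) //=; apply: eq_bigr => m _.
  rewrite (big_pred1 (enum_val m)); last by move=> j; rewrite /= eq_sym.
  by rewrite (proj2 (cE m)) scalerA.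
move=> m; have := alpha_indep d d0 (enum_val m).
rewrite /d (big_pred1 m); last by move=> m'; rewrite /= (inj_eq enum_val_inj).
by move/eqP; rewrite mulf_eq0 (lt_eqF (proj1 (cE m))) orbF => /eqP.
Qed.

Hypothesis Bu : B \in unitmx.

(* The [lH k] are independent and lie in the dual lattice, so the rational matrix
   [(<col r B, lH k>)_(r, k)] has full column rank and thus a left inverse. *)
Lemma lH_dual_basis (m0 : 'I_#|K|) : exists q : 'I_n -> rat,
  forall m, \sum_r ratr (q r) * dot (col r B) (lH (enum_val m)) = (m == m0)%:R.
Proof.
have /fin_all_exists [f fE] : forall rm : 'I_n * 'I_#|K|,
    exists a : rat, ratr a = dot (col rm.1 B) (lH (enum_val rm.2)).
  move=> rm; have [[lHM _ _] _] := lH_normal (enum_valP rm.2).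
  by have [z zE] := (inMdualP B _).1 lHM rm.1; exists z%:~R; rewrite rmorph_int dotC zE.
pose A : 'M[rat]_(n, #|K|) := \matrix_(r, m) f (r, m).
pose L := mx_of_cols (fun m : 'I_#|K| => lH (enum_val m)).
have AE : map_mx ratr A = B^T *m L.
  apply/matrixP => r m; rewrite !mxE fE dotE /=; apply: eq_bigr => j _.
  by rewrite !mxE.
have rankA : \rank A = #|K|.
  rewrite -(mxrank_map (@ratr R)) AE -mxrank_tr trmx_mul mxrankMfree ?trmxK ?row_free_unit //.
  exact/eqP/row_free_tr_mx_of_cols/lH_lin_indep.
have /row_fullP[A' A'A] : row_full A by rewrite -col_leq_rank rankA.
exists (fun r => A' m0 r) => m.
have := congr1 (fun M : 'M[rat]_#|K| => ratr (M m0 m) : R) A'A.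
rewrite !mxE rmorph_sum /= rmorph_nat eq_sym => <-; apply: eq_bigr => r _.
by rewrite rmorphM /= mxE fE.
Qed.

End SimpleRootNormals.

Section IdealIJ.
Variables (R : realType) (n : nat).
Local Notation V := 'cV[R]_n.
Variables (Rt : seq V) (B : 'M[R]_n) (Lam : seq V).
Variables (NK : nat) (FK : 'I_NK -> V) (N : nat) (ix : 'I_N -> 'I_NK * 'M[R]_n).
Local Notation IJ := (inIJ Rt B Lam FK ix).

Lemma inIJ_Jgen g : isJgen Rt B Lam FK ix g -> IJ g.
Proof.
move=> gJ; exists 1%N, (fun _ => 1), (fun _ => g); split; first by right.
by rewrite big_ord1 mul1r.
Qed.

Lemma inIJ0 : IJ 0.
Proof. by exists 0%N, (fun _ => 0), (fun _ => 0); split=> [[]//|]; rewrite big_ord0. Qed.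

Lemma inIJD p q : IJ p -> IJ q -> IJ (p + q).
Proof.
case=> m1 [a1 [g1 [g1IJ ->]]] [m2 [a2 [g2 [g2IJ ->]]]].
pose a r := match split r with inl r1 => a1 r1 | inr r2 => a2 r2 end.
pose g r := match split r with inl r1 => g1 r1 | inr r2 => g2 r2 end.
exists (m1 + m2)%N, a, g; split; first by move=> r; rewrite /g; case: (split r).
rewrite big_split_ord; congr (_ + _); apply: eq_bigr => r _.
  by rewrite /a /g (unsplitK (inl r : 'I_m1 + 'I_m2)).
by rewrite /a /g (unsplitK (inr r : 'I_m1 + 'I_m2)).
Qed.

Lemma inIJMl c p : IJ p -> IJ (c * p).
Proof.
case=> m [a [g [gIJ ->]]]; exists m, (fun r => c * a r), g; split=> //.
by rewrite mulr_sumr; apply: eq_bigr => r _; rewrite mulrA.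
Qed.

Lemma inIJB p q : IJ p -> IJ q -> IJ (p - q).
Proof. by move=> pIJ qIJ; apply: inIJD; rewrite // -mulN1r; apply: inIJMl. Qed.

Lemma inIJZ c p : IJ p -> IJ (c *: p).
Proof. by rewrite -mul_mpolyC; apply: inIJMl. Qed.

Lemma inIJ_sum (I : Type) (r : seq I) (P : pred I) (F : I -> {mpoly rat[N]}) :
  (forall i, P i -> IJ (F i)) -> IJ (\sum_(i <- r | P i) F i).
Proof. by move=> FIJ; elim/big_rec: _ => [|i x Pi xIJ]; [exact: inIJ0 | apply: inIJD; first exact: FIJ]. Qed.

Definition congIJ (x y : {mpoly rat[N]}) := IJ (x - y).

Lemma congIJ_refl x : congIJ x x.
Proof. by rewrite /congIJ subrr; apply: inIJ0. Qed.

Lemma congIJD x1 x2 y1 y2 : congIJ x1 y1 -> congIJ x2 y2 -> congIJ (x1 + x2) (y1 + y2).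
Proof. by rewrite /congIJ opprD addrACA; apply: inIJD. Qed.

Lemma congIJZ c x y : congIJ x y -> congIJ (c *: x) (c *: y).
Proof. by rewrite /congIJ -scalerBr; apply: inIJZ. Qed.

Lemma congIJM x1 x2 y1 y2 : congIJ x1 y1 -> congIJ x2 y2 -> congIJ (x1 * x2) (y1 * y2).
Proof.
move=> xy1 xy2; rewrite /congIJ.
have -> : x1 * x2 - y1 * y2 = x1 * (x2 - y2) + y2 * (x1 - y1).
  by rewrite mulrBr [y2 * _]mulrC mulrBl addrA subrK.
by apply: inIJD; apply: inIJMl.
Qed.

Lemma congIJ_prod (I : Type) (r : seq I) (P : pred I) (F1 F2 : I -> {mpoly rat[N]}) :
  (forall i, P i -> congIJ (F1 i) (F2 i)) ->
  congIJ (\prod_(i <- r | P i) F1 i) (\prod_(i <- r | P i) F2 i).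
Proof.
move=> F12; apply: (big_ind2 congIJ) => //; first exact: congIJ_refl.
by move=> *; apply: congIJM.
Qed.

Lemma congIJ_exp x y k : congIJ x y -> congIJ (x ^+ k) (y ^+ k).
Proof.
move=> xy; elim: k => [|k IH]; first by rewrite !expr0; apply: congIJ_refl.
by rewrite !exprS; apply: congIJM.
Qed.

Lemma act_comp_mpoly_congIJ (sigma : 'I_N -> 'I_N) (k : nat) (lq : k.-tuple {mpoly rat[N]}) :
  (forall i, congIJ (act sigma (tnth lq i)) (tnth lq i)) ->
  forall p : {mpoly rat[k]}, congIJ (act sigma (comp_mpoly lq p)) (comp_mpoly lq p).
Proof.
move=> lq_cong; elim/mpolyind => [|c m p _ _ IH]; first by rewrite /act !comp_mpoly0; apply: congIJ_refl.
rewrite /act !comp_mpolyD !comp_mpolyZ; apply: congIJD; last exact: IH.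
apply: congIJZ; rewrite !comp_mpolyX rmorph_prod /=.
by apply: congIJ_prod => i _; rewrite rmorphXn; apply/congIJ_exp/lq_cong.
Qed.

End IdealIJ.

Section ParabolicSubgroup.
Variables (R : realType) (n : nat).
Local Notation V := 'cV[R]_n.
Variables (alpha : 'I_n -> V) (K : {set 'I_n}).

Lemma inWK_mul (w1 w2 : 'M[R]_n) :
  inWK alpha K w1 -> inWK alpha K w2 -> inWK alpha K (w1 *m w2).
Proof.
case=> s1 [s1K ->] [s2 [s2K ->]]; exists (s1 ++ s2); split; last by rewrite map_cat prod_refl_cat.
by move=> x; rewrite mem_cat => /orP[]; [apply: s1K | apply: s2K].
Qed.

Lemma inWK_tr (w : 'M[R]_n) : inWK alpha K w -> inWK alpha K w^T.
Proof.
case=> s [sK ->]; exists (rev s); split; last by rewrite trmx_prod_refl map_rev.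
by move=> x; rewrite mem_rev; apply: sK.
Qed.

Lemma inWK_W (Rt : seq V) (w : 'M[R]_n) :
  (forall i, alpha i \in Rt) -> inWK alpha K w -> inW Rt w.
Proof. by move=> alphaRt [s [_ ->]]; exists (map alpha s); split=> // x /mapP[i _ ->]. Qed.

End ParabolicSubgroup.

Section FacetStabilizer.
Variables (R : realType) (n : nat).
Local Notation V := 'cV[R]_n.
Variables (Rt Lam : seq V) (alpha : 'I_n -> V) (B : 'M[R]_n) (K : {set 'I_n}).
Local Notation P := (inP Rt Lam).
Hypothesis Rt0 : 0 \notin Rt.
Hypothesis latok : lattice_ok Rt B.
Hypothesis Bu : B \in unitmx.
Hypothesis fd : full_dim P.
Hypothesis alphaRt : forall i, alpha i \in Rt.

Lemma img_W (w : 'M[R]_n) (G : V -> Prop) x : inW Rt w -> img w G x <-> G (w^T *m x).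
Proof.
move=> wW; split=> [[y [Gy ->]] | GwTx]; first by rewrite (mulWtrK Rt0 wW).
by exists (w^T *m x); rewrite (multrWK Rt0 wW).
Qed.

Lemma isNormalOf_img (w : 'M[R]_n) (l l' : V) : inW Rt w -> isFacetNormal B P l ->
  isNormalOf B P l' (img w (face P l)) -> l' = w *m l.
Proof.
move=> wW lF [l'F l'face]; have wTW := inW_tr wW.
rewrite -(multrWK Rt0 wW l'); congr (_ *m _).
apply: (isFacetNormal_unique Bu fd); first exact: (isFacetNormal_W Rt0 latok).
  exact: lF.
by move=> x; rewrite (face_W _ Rt0 _ _ wTW) trmxK l'face (img_W _ _ wW) (mulWtrK Rt0 wW).
Qed.

Lemma stabF_fixE (l : V) (w : 'M[R]_n) : isFacetNormal B P l -> inWK alpha K w ->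
  stabF alpha K P l w <-> w *m l = l.
Proof.
move=> lF wWK; have wW := inWK_W alphaRt wWK.
have faceE x : face P (w *m l) x <-> img w (face P l) x.
  by rewrite (face_W _ Rt0 _ _ wW) (img_W _ _ wW).
split=> [[_ wl] | wl]; last by split=> // x; rewrite -faceE wl.
apply: (isFacetNormal_unique Bu fd (isFacetNormal_W Rt0 latok wW lF) lF) => x.
by rewrite faceE.
Qed.

Lemma same_cosetE (l : V) (s s' : 'M[R]_n) : isFacetNormal B P l ->
  inWK alpha K s -> inWK alpha K s' -> same_coset alpha K P l s s' <-> s *m l = s' *m l.
Proof.
move=> lF sWK s'WK; have sW := inWK_W alphaRt sWK.
rewrite /same_coset (invmx_W Rt0 sW) stabF_fixE //; last exact/inWK_mul/s'WK/inWK_tr.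
rewrite -mulmxA; split=> sl; first by rewrite -{1}sl (multrWK Rt0 sW).
by rewrite -sl (mulWtrK Rt0 sW).
Qed.

End FacetStabilizer.

Section WeylInvariance.
Variables (R : realType) (n : nat).
Local Notation V := 'cV[R]_n.
Variables (Rt : seq V) (alpha : 'I_n -> V) (B : 'M[R]_n) (Lam : seq V) (K : {set 'I_n}).
Variables (NK : nat) (FK : 'I_NK -> V) (N : nat) (ix : 'I_N -> 'I_NK * 'M[R]_n).
Local Notation P := (inP Rt Lam).
Local Notation IJ := (inIJ Rt B Lam FK ix).
Local Notation congIJ := (congIJ Rt B Lam FK ix).
Local Notation lsF i := ((ix i).2 *m FK (ix i).1).
Hypothesis hset : setting Rt alpha B Lam.
Hypothesis hFK : FK_enum Rt alpha B Lam K FK.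
Hypothesis hpair : pair_enum Rt alpha Lam K FK ix.

Let Rt0 : 0 \notin Rt. Proof. by case: hset => -[]. Qed.
Let latok : lattice_ok Rt B. Proof. by case: hset. Qed.
Let Bu : B \in unitmx. Proof. by case: hset => _ _ []. Qed.
Let fd : full_dim P. Proof. by case: hset => _ _ _ _ []. Qed.
Let alphaRt i : alpha i \in Rt. Proof. by case: hset => _ []. Qed.
Let FK_facet j : isFacetNormal B P (FK j). Proof. by case: hFK => _ /(_ j)[]. Qed.
Let s_WK i : inWK alpha K (ix i).2. Proof. by case: hpair. Qed.
Let s_W i : inW Rt (ix i).2. Proof. exact: inWK_W alphaRt (s_WK i). Qed.

Lemma sF_normalE i l : isNormalOf B P l (sF Rt Lam FK ix i) -> l = lsF i.
Proof. exact: (isNormalOf_img Rt0 latok Bu fd (s_W i) (FK_facet _)). Qed.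

Lemma J_form (u : 'I_n -> V) (q : 'I_n -> rat) : (forall r, inM B (u r)) ->
  exists c : 'I_N -> rat,
    (forall i, ratr (c i) = \sum_r ratr (q r) * dot (u r) (lsF i)) /\ IJ (\sum_i c i *: 'X_i).
Proof.
move=> uM.
have /fin_all_exists [cf cfE] : forall r, exists cf : 'I_N -> rat,
    forall i, ratr (cf i) = dot (u r) (lsF i).
  move=> r; apply: (@fin_all_exists _ (fun=> rat) (fun i c => ratr c = dot (u r) (lsF i))) => i.
  have [[lsFM _ _] _] := FK_facet (ix i).1.
  have [z zE] := inMdual_W latok (s_W i) lsFM (uM r).
  by exists z%:~R; rewrite rmorph_int dotC zE.
have cfIJ r : IJ (\sum_i cf r i *: 'X_i).
  apply: inIJ_Jgen; exists (u r); split=> //; exists (cf r); split=> // i l /sF_normalE ->.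
  exact: cfE.
exists (fun i => \sum_r q r * cf r i); split.
  by move=> i; rewrite rmorph_sum; apply: eq_bigr => r _; rewrite rmorphM /= cfE.
have -> : \sum_i (\sum_r q r * cf r i) *: ('X_i : {mpoly rat[N]}) =
          \sum_r q r *: \sum_i cf r i *: 'X_i.
  under eq_bigr do rewrite scaler_suml; rewrite exchange_big /=.
  by apply: eq_bigr => r _; rewrite scaler_sumr; apply: eq_bigr => i _; rewrite scalerA.
by apply: inIJ_sum => r _; apply: inIJZ.
Qed.

Variables (t : 'M[R]_n) (sigma : 'I_N -> 'I_N).
Hypothesis tWK : inWK alpha K t.
Hypothesis hrep : represents_t Rt alpha Lam K FK ix t sigma.

Lemma sigma_fst i : (ix (sigma i)).1 = (ix i).1.
Proof. by case: (hrep i). Qed.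

Lemma lsF_sigma i : lsF (sigma i) = t *m lsF i.
Proof.
have [_ /(same_cosetE Rt0 latok Bu fd alphaRt)] := hrep i.
by rewrite sigma_fst -mulmxA => ->; rewrite //; apply: inWK_mul.
Qed.

Lemma sigma_inj : injective sigma.
Proof.
move=> i i' sii'; have [_ _ ix_uniq] := hpair.
have ii' : (ix i).1 = (ix i').1 by rewrite -sigma_fst sii' sigma_fst.
apply: ix_uniq => //; apply/(same_cosetE Rt0 latok Bu fd alphaRt) => //.
apply: (can_inj (mulWtrK Rt0 (inWK_W alphaRt tWK))).
by rewrite -lsF_sigma ii' -lsF_sigma sii'.
Qed.

Lemma act_X i : act sigma ('X_i : {mpoly rat[N]}) = 'X_(sigma i).
Proof. by rewrite /act comp_mpolyXU -tnth_nth tnth_mktuple. Qed.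

Lemma act_orbit_sum j :
  act sigma (\sum_(i | (ix i).1 == j) 'X_i) = \sum_(i | (ix i).1 == j) 'X_i.
Proof.
rewrite /act rmorph_sum /= (eq_bigr (fun i => 'X_(sigma i))) => [|i _]; last exact: act_X.
by rewrite [RHS](reindex_inj sigma_inj); apply: eq_bigl => i; rewrite /= sigma_fst.
Qed.

Lemma act_sub_sum_scale (a b c e : 'I_N -> rat) :
  (forall i, c i = a i + e i) -> (forall i, e (sigma i) = e i) ->
  (forall i, b (sigma i) = c i) ->
  act sigma (\sum_i a i *: 'X_i) - \sum_i a i *: 'X_i =
  \sum_i b i *: 'X_i - \sum_i c i *: 'X_i.
Proof.
move=> cE eE bE.
have sum_sigma f : \sum_i f i *: 'X_i = \sum_i f (sigma i) *: 'X_(sigma i) :> {mpoly rat[N]}.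
  by rewrite (reindex_inj sigma_inj).
have sum_c g : \sum_i c i *: g i = \sum_i a i *: g i + \sum_i e i *: g i :> {mpoly rat[N]}.
  by rewrite -big_split; apply: eq_bigr => i _; rewrite cE scalerDl.
have act_a : act sigma (\sum_i a i *: 'X_i) = \sum_i a i *: 'X_(sigma i).
  rewrite /act rmorph_sum /=; apply: eq_bigr => i _.
  by rewrite comp_mpolyZ; congr (_ *: _); apply: act_X.
have e_sigma : \sum_i e i *: 'X_(sigma i) = \sum_i e i *: 'X_i :> {mpoly rat[N]}.
  by rewrite [RHS]sum_sigma; apply: eq_bigr => i _; rewrite eE.
have b_sigma : \sum_i b i *: 'X_i = \sum_i c i *: 'X_(sigma i) :> {mpoly rat[N]}.
  by rewrite sum_sigma; apply: eq_bigr => i _; rewrite bE.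
by rewrite act_a b_sigma !sum_c e_sigma opprD addrACA subrr addr0.
Qed.

Variables (lH : 'I_n -> V) (C : 'I_N -> 'I_#|K| -> rat).
Hypothesis hlH : forall k, k \in K -> isLH B alpha k (lH k).
Hypothesis hC : C_ok FK ix lH C.

Lemma act_Y_congIJ m0 : congIJ (act sigma (\sum_i C i m0 *: 'X_i)) (\sum_i C i m0 *: 'X_i).
Proof.
have simple : simple_system Rt alpha by case: hset.
have [q qE] := lH_dual_basis simple hlH Bu m0.
have [c [cE cIJ]] := J_form q (inM_col B).
have [b [bE bIJ]] := J_form q (fun r => inM_W latok (inWK_W alphaRt tWK) (inM_col B r)).
have dual_C i : \sum_r ratr (q r) * dot (col r B) (\sum_m ratr (C i m) *: lH (enum_val m))
    = ratr (C i m0).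
  have qC m : \sum_r ratr (q r) * dot (col r B) (ratr (C i m) *: lH (enum_val m))
      = ratr (C i m) * (m == m0)%:R.
    by rewrite -qE mulr_sumr; apply: eq_bigr => r _; rewrite dotZr mulrCA.
  under eq_bigr do rewrite dot_sumr mulr_sumr; rewrite exchange_big /=.
  under eq_bigr do rewrite qC.
  by rewrite (bigD1 m0) //= eqxx mulr1 big1 ?addr0 // => m /negbTE ->; rewrite mulr0.
have eE i : ratr (c i - C i m0) = \sum_r ratr (q r) * dot (col r B) (FK (ix i).1) :> R.
  rewrite rmorphB /= cE -[lsF i](subrK (FK (ix i).1)) hC.
  rewrite -(dual_C i) -sumrB; apply: eq_bigr => r _.
  by rewrite dotDr mulrDr addrC addKr.
rewrite /congIJ (@act_sub_sum_scale _ b c (fun i => c i - C i m0)).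
- exact: inIJB.
- by move=> i; rewrite addrC subrK.
- by move=> i; apply: (fmorph_inj (@ratr R)); rewrite /= !eE sigma_fst.
move=> i; apply: (fmorph_inj (@ratr R)); rewrite /= bE cE lsF_sigma.
by apply: eq_bigr => r _; rewrite (dot_mulW Rt0 _ _ (inWK_W alphaRt tWK)).
Qed.

End WeylInvariance.

Unset Implicit Arguments. Set Strict Implicit.
Theorem lemma4p1 (R : realType) (n : nat) (Rt : seq 'cV[R]_n) (alpha : 'I_n -> 'cV[R]_n)
    (B : 'M[R]_n) (Lam : seq 'cV[R]_n) (K : {set 'I_n})
    (NK : nat) (FK : 'I_NK -> 'cV[R]_n) (N : nat) (ix : 'I_N -> 'I_NK * 'M[R]_n)
    (lH : 'I_n -> 'cV[R]_n) (C : 'I_N -> 'I_#|K| -> rat) :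
  setting Rt alpha B Lam ->
  FK_enum Rt alpha B Lam K FK ->
  pair_enum Rt alpha Lam K FK ix ->
  (forall k, k \in K -> isLH B alpha k (lH k)) ->
  C_ok FK ix lH C ->
  forall (p : {mpoly rat[NK + #|K|]}) (t : 'M[R]_n) (sigma : 'I_N -> 'I_N),
    inWK alpha K t -> represents_t Rt alpha Lam K FK ix t sigma ->
    inIJ Rt B Lam FK ix (act sigma (Phi ix C p) - Phi ix C p).
Proof.
move=> hset hFK hpair hlH hC p t sigma tWK hrep.
apply: (act_comp_mpoly_congIJ (Rt := Rt) (B := B) (Lam := Lam) (FK := FK) (ix := ix)) => v.
rewrite tnth_mktuple /Phi_gen; case: (split v) => [j | m].
  by rewrite (act_orbit_sum hset hFK hpair tWK hrep); apply: congIJ_refl.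
exact: (act_Y_congIJ hset hFK hpair tWK hrep hlH hC).
Qed.
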